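(* Let $q\ge5$, $\mu\in\mathbb{F}_q\setminus\{0,1\}$, and let $\ell_\mu$ be the line through $\mathbf{P}(0,\mu,0,1)$ and $\mathbf{P}(1,0,1,0)$. Then $\ell_\mu$ is an $\mathcal{E}_{nG}$-line in each of the following cases: (i) $q$ is even; (ii) $q\equiv0\pmod3$; (iii) $q\not\equiv0\pmod3$, $q$ is odd and $\mu\ne1/9$.
   Context: Points of $\mathrm{PG}(3,q)$ are written $\mathbf{P}(x_0,x_1,x_2,x_3)$ over $\mathbb{F}_q$. For $t$ in $\mathbb{F}_q$ or $\mathbb{F}_{q^2}$ put $P(t)=\mathbf{P}(t^3,t^2,t,1)$, $P(\infty)=\mathbf{P}(1,0,0,0)$; the twisted cubic is $\mathscr{C}=\{P(t):t\in\mathbb{F}_q\cup\{\infty\}\}$. The osculating plane $\pi_{osc}(t)$ is $x_0-3tx_1+3t^2x_2-t^3x_3=0$ for finite $t$ and $\pi_{osc}(\infty)$ is $x_3=0$. An imaginary chord is a line of $\mathrm{PG}(3,q)$ joining $P(t_1),P(t_2)$ with $t_1,t_2=t_1^q\in\mathbb{F}_{q^2}\setminus\mathbb{F}_q$; an imaginary axis is a line of $\mathrm{PG}(3,q)$ equal to $\pi_{osc}(t_1)\cap\pi_{osc}(t_2)$ with $t_1,t_2=t_1^q\in\mathbb{F}_{q^2}\setminus\mathbb{F}_q$. An $\mathcal{E}_{nG}$-line is a line of $\mathrm{PG}(3,q)$ with no point on $\mathscr{C}$, not contained in any $\pi_{osc}(t)$, $t\in\mathbb{F}_q\cup\{\infty\}$,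 and which is neither an imaginary chord nor an imaginary axis. *)

From HB Require Import structures.
From mathcomp Require Import all_boot all_order all_algebra all_field.
Set Implicit Arguments. Unset Strict Implicit. Unset Printing Implicit Defensive.
Import Order.TTheory GRing.Theory.
Local Open Scope ring_scope.

(* Points of PG(3,K) are represented by nonzero row vectors (x0,x1,x2,x3);
   subspaces (lines, planes) by row spaces of matrices (mxalgebra). *)

Definition vec4 (K : nzRingType) (a b c d : K) : 'rV[K]_4 :=
  \row_(i < 4) nth 0 [:: a; b; c; d] i.

Definition Pt (K : nzRingType) (t : K) : 'rV[K]_4 := vec4 (t ^+ 3) (t ^+ 2) t 1.
Definition Pinf (K : nzRingType) : 'rV[K]_4 := vec4 1 0 0 0.

(* coefficient vectors of osculating planes:
   pi_osc(t) : x0 - 3t x1 + 3t^2 x2 - t^3 x3 = 0 ; pi_osc(oo) : x3 = 0.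
   A point x lies on the plane with coefficient vector c iff x *m c^T = 0. *)
Definition osc (K : nzRingType) (t : K) : 'rV[K]_4 :=
  vec4 1 (- (3%:R * t)) (3%:R * t ^+ 2) (- t ^+ 3).
Definition osc_inf (K : nzRingType) : 'rV[K]_4 := vec4 0 0 0 1.

Definition join (K : nzRingType) (a b : 'rV[K]_4) : 'M[K]_(2, 4) := col_mx a b.

Section Lines.
Variable F : finFieldType.

Definition no_point_on_cubic (A : 'M[F]_(2, 4)) : Prop :=
  (forall t : F, ~~ (Pt t <= A)%MS) /\ ~~ (Pinf F <= A)%MS.

Definition not_in_osc_plane (A : 'M[F]_(2, 4)) : Prop :=
  (forall t : F, A *m (osc t)^T != 0) /\ A *m (osc_inf F)^T != 0.

(* L plays the role of F_{q^2}, iota the embedding F_q -> F_{q^2}. *)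
Definition imaginary_chord (L : finFieldType) (iota : {rmorphism F -> L})
  (A : 'M[F]_(2, 4)) : Prop :=
  exists t1 : L, (forall x : F, iota x != t1) /\
    (map_mx iota A == join (Pt t1) (Pt (t1 ^+ #|F|)))%MS.

(* the intersection of the planes with coefficient vectors c1, c2 is the
   row kernel of the 4x2 matrix [c1; c2]^T *)
Definition imaginary_axis (L : finFieldType) (iota : {rmorphism F -> L})
  (A : 'M[F]_(2, 4)) : Prop :=
  exists t1 : L, (forall x : F, iota x != t1) /\
    (map_mx iota A == kermx (col_mx (osc t1) (osc (t1 ^+ #|F|)))^T)%MS.

Definition EnG_line (A : 'M[F]_(2, 4)) : Prop :=
  no_point_on_cubic A /\ not_in_osc_plane A /\
  forall (L : finFieldType) (iota : {rmorphism F -> L}),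
    #|L| = (#|F| ^ 2)%N -> ~ imaginary_chord iota A /\ ~ imaginary_axis iota A.

Definition ell (mu : F) : 'M[F]_(2, 4) := join (vec4 0 mu 0 1) (vec4 1 0 1 0).

End Lines.

From HB Require Import structures.
From mathcomp Require Import all_boot all_order all_algebra all_field.
From mathcomp Require Import ring.
Import Order.TTheory GRing.Theory.
Local Open Scope ring_scope.

(* The points of ell_mu are exactly those with x0 = x2 and x1 = mu x3.  A point
   P(t) satisfies this iff t^3 = t and t^2 = mu, which forces t in {0, 1, -1}
   and hence mu in {0, 1}; this excludes both real points of the cubic and
   imaginary chords.  The line lies in pi_osc(t) iff 1 + 3t^2 = 0 and
   t^3 + 3 mu t = 0, which forces 9 mu = 1; this is impossible in
   characteristic 2 (where 9 = 1 and mu != 1), in characteristic 3 (where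
   9 = 0) and by hypothesis otherwise.  Since an imaginary axis lies in
   pi_osc(t1), it is excluded as well. *)

(* [ell] is only defined over finite fields; this is the same line over any
   field, so that it can also be used over the extension field L. *)
Local Notation ell_ m := (join (vec4 0 m 0 1) (vec4 1 0 1 0)).

Lemma vec4_mul_tr_eq0 (K : fieldType) (a b c d x y z w : K) :
  (vec4 a b c d *m (vec4 x y z w)^T == 0) = (a * x + b * y + c * z + d * w == 0).
Proof.
rewrite [_ *m _]mx11_scalar fmorph_eq0.
by rewrite !mxE !big_ord_recl big_ord0 /= !mxE /= addr0 !addrA.
Qed.

Lemma join_mulmx_eq0 (K : nzRingType) n (a b : 'rV[K]_4) (C : 'M[K]_(4, n)) :
  (join a b *m C == 0) = (a *m C == 0) && (b *m C == 0).
Proof. by rewrite -col_mx_eq0 -mul_col_mx. Qed.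

Lemma map_vec4 (R S : nzRingType) (f : {rmorphism R -> S}) (a b c d : R) :
  map_mx f (vec4 a b c d) = vec4 (f a) (f b) (f c) (f d).
Proof. by apply/rowP => j; rewrite !mxE; case: j => [[|[|[|[|j]]]] ?]. Qed.

Lemma map_ell (F : finFieldType) (L : nzRingType) (f : {rmorphism F -> L})
    (mu : F) :
  map_mx f (ell mu) = ell_ (f mu).
Proof.
have := map_col_mx f (vec4 0 mu 0 1) (vec4 1 0 1 0).
by rewrite !map_vec4 rmorph0 rmorph1.
Qed.

Lemma join_subl (K : fieldType) (a b : 'rV[K]_4) : (a <= join a b)%MS.
Proof.
have : (col_mx a b <= join a b)%MS := submx_refl _.
by rewrite col_mx_sub => /andP[].
Qed.

Lemma natr_prime_dvd_card (F : finFieldType) (r : nat) :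
  prime r -> (r %| #|F|)%N -> (r%:R : F) = 0.
Proof.
move=> pr_r r_dvd; have [p pr_p charFp] := finPcharP F.
move: r_dvd; rewrite (card_pprimeChar charFp) Euclid_dvdX // => /andP[+ _].
by rewrite dvdn_prime2 // => /eqP ->; apply: pcharf0.
Qed.

Lemma cube_id_roots (K : idomainType) (t : K) :
  t ^+ 3 = t -> t \in [:: 0; 1; -1].
Proof.
move=> t3; have : t * ((t - 1) * (t + 1)) == 0.
  have -> : t * ((t - 1) * (t + 1)) = t ^+ 3 - t by ring.
  by rewrite t3 subrr.
by rewrite !inE !mulf_eq0 subr_eq0 addr_eq0.
Qed.

Section LineEll.
Variables (K : fieldType) (m : K).

Lemma sub_ell (v : 'rV[K]_4) :
  (v <= ell_ m)%MS -> v 0 0 = v 0 2%:R /\ v 0 1 = m * v 0 3%:R.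
Proof.
case/submxP=> D ->; rewrite !mxE !big_ord_recl !big_ord0 /join !mxE.
by do 2!(case: splitP => ? /=; rewrite ord1 => _); rewrite !mxE /=; split; ring.
Qed.

Lemma Pinf_notin_ell : ~~ (Pinf K <= ell_ m)%MS.
Proof. by apply/negP => /sub_ell[]; rewrite !mxE /= => /eqP; rewrite oner_eq0. Qed.

Lemma Pt_in_ell (t : K) : (Pt t <= ell_ m)%MS -> t \in [:: 0; 1; -1] /\ t ^+ 2 = m.
Proof. by case/sub_ell; rewrite !mxE /= mulr1 => /cube_id_roots. Qed.

Lemma ell_notin_osc_inf : ell_ m *m (osc_inf K)^T != 0.
Proof.
by rewrite join_mulmx_eq0 !vec4_mul_tr_eq0 !mulr0 !add0r mulr1 oner_eq0.
Qed.

Lemma ell_in_osc (t : K) : ell_ m *m (osc t)^T = 0 -> 9%:R * m = 1.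
Proof.
move/eqP; rewrite join_mulmx_eq0 !vec4_mul_tr_eq0 => /andP[/eqP e1 /eqP e2].
have sq : 3%:R * t ^+ 2 = -1.
  by apply/eqP; rewrite -subr_eq0 opprK -e2; apply/eqP; ring.
have t_neq0 : t != 0.
  apply: contra_eq_neq sq => ->.
  by rewrite expr0n mulr0 eq_sym oppr_eq0 oner_neq0.
have : t * (t ^+ 2 + 3%:R * m) = 0 by rewrite -[RHS]oppr0 -e1; ring.
move/eqP; rewrite mulf_eq0 (negPf t_neq0) => /eqP tm.
have -> : 9%:R * m = 3%:R * (t ^+ 2 + 3%:R * m) - 3%:R * t ^+ 2 by ring.
by rewrite tm sq mulr0 sub0r opprK.
Qed.

End LineEll.

Lemma nine_mul_neq1 (F : finFieldType) (mu : F) : mu != 1 ->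
  [\/ ~~ odd #|F|,
      (#|F| %% 3 == 0)%N
    | [/\ (#|F| %% 3 != 0)%N, odd #|F| & mu != (9%:R)^-1] ] ->
  9%:R * mu != 1.
Proof.
move=> mu_neq1 [even_q|q_mod3|[_ _ mu_neq]].
- have two0 : (2%:R : F) = 0 by apply: natr_prime_dvd_card; rewrite // dvdn2.
  by rewrite (natrD _ 1 8) (natrM _ 2 4) two0 mul0r addr0 mul1r.
- have three0 : (3%:R : F) = 0 by apply: natr_prime_dvd_card; rewrite // /dvdn.
  by rewrite (natrM _ 3 3) three0 !mul0r eq_sym oner_eq0.
- apply: contra_neq mu_neq => nine_mu.
  have nine_neq0 : (9%:R : F) != 0.
    by apply: contra_eq_neq nine_mu => ->; rewrite mul0r eq_sym oner_neq0.
  by apply: (mulfI nine_neq0); rewrite nine_mu mulfV.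
Qed.

Section EllMu.
Variables (F : finFieldType) (mu : F).

Lemma ell_no_point_on_cubic : mu != 0 -> mu != 1 -> no_point_on_cubic (ell mu).
Proof.
move=> mu_neq0 mu_neq1; split; last exact: Pinf_notin_ell.
move=> t; apply/negP => /Pt_in_ell[t_roots t_sq].
move: mu_neq0 mu_neq1; rewrite -t_sq !inE in t_roots *.
by case/or3P: t_roots => /eqP->; rewrite ?sqrrN ?expr0n ?expr1n eqxx ?andbF.
Qed.

Lemma ell_not_in_osc_plane : 9%:R * mu != 1 -> not_in_osc_plane (ell mu).
Proof.
move=> nine_mu; split; last exact: ell_notin_osc_inf.
by move=> t; apply: contra_neq nine_mu => /ell_in_osc.
Qed.

Lemma ell_not_imaginary_chord (L : finFieldType) (iota : {rmorphism F -> L}) :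
  ~ imaginary_chord iota (ell mu).
Proof.
case=> t1 [t1_notin_F /andP[_ ell_sub]].
have /Pt_in_ell[] : (Pt t1 <= ell_ (iota mu))%MS.
  by rewrite -map_ell; apply: submx_trans ell_sub; apply: join_subl.
rewrite !inE => /or3P[]/eqP t1E; [move: (t1_notin_F 0) | move: (t1_notin_F 1)
  | move: (t1_notin_F (-1))]; by rewrite ?rmorph0 ?rmorph1 ?rmorphN1 t1E eqxx.
Qed.

Lemma ell_not_imaginary_axis (L : finFieldType) (iota : {rmorphism F -> L}) :
  9%:R * mu != 1 -> ~ imaginary_axis iota (ell mu).
Proof.
move=> nine_mu [t1 [_ /andP[ell_sub _]]].
move: ell_sub; rewrite sub_kermx tr_col_mx mul_mx_row row_mx_eq0 map_ell.
case/andP => /eqP /ell_in_osc nine_mu_L _.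
move: nine_mu; rewrite -(inj_eq (fmorph_inj iota)).
by rewrite rmorphM rmorph_nat rmorph1 nine_mu_L eqxx.
Qed.

End EllMu.

Theorem lemma4p4 (F : finFieldType) (mu : F) :
  (5 <= #|F|)%N -> mu != 0 -> mu != 1 ->
  [\/ ~~ odd #|F|,
      (#|F| %% 3 == 0)%N
    | [/\ (#|F| %% 3 != 0)%N, odd #|F| & mu != (9%:R)^-1] ] ->
  EnG_line (ell mu).
Proof.
move=> _ mu_neq0 mu_neq1 hq; have nine_mu : 9%:R * mu != 1 by apply: nine_mul_neq1.
split; first exact: ell_no_point_on_cubic.
split; first exact: ell_not_in_osc_plane.
move=> L iota _; split; first exact: ell_not_imaginary_chord.
exact: ell_not_imaginary_axis.
Qed.
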